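(* Suppose $\max_{0\le j\le p}|f_j(\bm X)|\le C_0$ a.s. and $|S_{\bar\gamma}|\lambda_0\le\zeta_0$. Suppose the event $$D^\dagger_{\rm CAL}(\hat\gamma^\top\bm F,\bar\gamma^\top\bm F)+(A_0-1)\lambda_0\|\hat\gamma-\bar\gamma\|_1\le M_0|S_{\bar\gamma}|\lambda_0^2$$ holds for constants $A_0>1$ and $M_0>0$. Then $$\tilde{\mathbb E}[Rw(\bm X;\bar\gamma)\{(\hat\gamma-\bar\gamma)^\top\bm F\}^2]\le\exp(\eta_{01})M_0|S_{\bar\gamma}|\lambda_0^2,\qquad\eta_{01}=(A_0-1)^{-1}M_0C_0\zeta_0.$$
   Context: $\tilde{\mathbb E}$ denotes the sample mean over i.i.d. observations $(\bm X_i,R_i)$, $i=1,\dots,N$, with $R_i\in\{0,1\}$. $\bm F=(f_0(\bm X),\dots,f_p(\bm X))^\top$, and $w(\bm X;\gamma)=\exp(-\gamma^\top\bm F)$. $\hat\gamma,\bar\gamma\in\mathbb R^{p+1}$ are arbitrary vectors. $S_{\bar\gamma}=\{0\}\cup\{j\ge1:\bar\gamma_j\neq0\}$, and $\lambda_0>0$, $\zeta_0>0$. $D^\dagger_{\rm CAL}(\hat\gamma^\top\bm F,\bar\gamma^\top\bm F)=-\tilde{\mathbb E}[R\{\exp(-\hat\gamma^\top\bm F)-\exp(-\bar\gamma^\top\bm F)\}(\hat\gamma-\bar\gamma)^\top\bm F]$, which is nonnegative. *)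

From mathcomp Require Import all_boot all_order all_algebra.
From mathcomp Require Import reals.
From mathcomp Require Import sequences exp.
Set Implicit Arguments. Unset Strict Implicit. Unset Printing Implicit Defensive.
Import Order.TTheory GRing.Theory Num.Theory.
Local Open Scope ring_scope.

(* Observations i : 'I_N; basis values Fv i j = f_j(X_i), j : 'I_p.+1;
   Rv i = R_i in {0,1} (as bool); coefficient vectors g : 'I_p.+1 -> R. *)

Definition Emean {R : realType} (N : nat) (h : 'I_N -> R) : R :=
  N%:R^-1 * \sum_(i < N) h i.

Definition linF {R : realType} (N p : nat) (Fv : 'I_N -> 'I_p.+1 -> R)
  (g : 'I_p.+1 -> R) (i : 'I_N) : R := \sum_(j < p.+1) g j * Fv i j.

Definition wfun {R : realType} (N p : nat) (Fv : 'I_N -> 'I_p.+1 -> R)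
  (g : 'I_p.+1 -> R) (i : 'I_N) : R := expR (- linF Fv g i).

Definition Rind {R : realType} (N : nat) (Rv : 'I_N -> bool) (i : 'I_N) : R :=
  (Rv i)%:R.

Definition DCAL {R : realType} (N p : nat) (Fv : 'I_N -> 'I_p.+1 -> R)
  (Rv : 'I_N -> bool) (ghat gbar : 'I_p.+1 -> R) : R :=
  - Emean (fun i => Rind Rv i * (wfun Fv ghat i - wfun Fv gbar i)
                    * (linF Fv ghat i - linF Fv gbar i)).

Definition l1norm {R : realType} (p : nat) (g : 'I_p.+1 -> R) : R :=
  \sum_(j < p.+1) `|g j|.

Definition supp0 {R : realType} (p : nat) (g : 'I_p.+1 -> R) : {set 'I_p.+1} :=
  [set j : 'I_p.+1 | (j == ord0) || (g j != 0)].

From mathcomp Require Import all_boot all_order all_algebra.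
From mathcomp Require Import reals.
From mathcomp Require Import sequences exp.
From mathcomp Require Import ring lra.
Set Implicit Arguments. Unset Strict Implicit. Unset Printing Implicit Defensive.
Import Order.TTheory GRing.Theory Num.Theory.
Local Open Scope ring_scope.

(* Write d_i = (ghat - gbar)^T F_i, so that w(X_i; ghat) = w(X_i; gbar) e^{-d_i}
   and D_CAL is the mean of R_i w(X_i; gbar) (1 - e^{-d_i}) d_i.  The elementary
   bound e^{-|d|} d^2 <= (1 - e^{-d}) d shows D_CAL >= 0, so the basic
   inequality bounds ||ghat - gbar||_1, hence |d_i| <= eta_01 uniformly; the
   same elementary bound then gives w(gbar) d_i^2 <= e^{eta_01} times the i-th
   term of D_CAL, and the mean of the latter is at most M0 |S| lambda0^2. *)

Lemma expRN_norm_sqr_le {R : realType} (d : R) :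
  expR (- `|d|) * d ^+ 2 <= (1 - expR (- d)) * d.
Proof.
(* From e^x >= 1 + x at x = d and x = -d, together with e^d e^{-d} = 1. *)
have geD := expR_ge1Dx d; have geN := expR_ge1Dx (- d).
have inv := expRxMexpNx_1 d; have posD := expR_gt0 d; have posN := expR_gt0 (- d).
case: (lerP 0 d) => hd.
- rewrite ger0_norm //.
  have := ler_wpM2l (ltW posN) geD.
  nra.
- rewrite ltr0_norm // opprK.
  have : expR d <= 1 by rewrite expR_le1 ltW.
  nra.
Qed.

Lemma subr_expRN_mul_ge0 {R : realType} (d : R) : 0 <= (1 - expR (- d)) * d.
Proof.
apply: le_trans (expRN_norm_sqr_le d).
by rewrite mulr_ge0 ?sqr_ge0 // ltW ?expR_gt0.
Qed.

Lemma sqr_le_expR_subr_expRN_mul {R : realType} (d eta : R) :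
  `|d| <= eta -> d ^+ 2 <= expR eta * ((1 - expR (- d)) * d).
Proof.
move=> hd.
have he : 1 <= expR eta * expR (- `|d|).
  by rewrite -expRD -(expR0 R) ler_expR; lra.
apply: le_trans (_ : _ <= expR eta * (expR (- `|d|) * d ^+ 2)) _.
  by rewrite mulrA -[X in X <= _]mul1r ler_wpM2r ?sqr_ge0.
by rewrite ler_wpM2l ?expRN_norm_sqr_le // ltW ?expR_gt0.
Qed.

Section SampleMean.
Variables (R : realType) (N : nat).

Lemma Emean_le (f g : 'I_N -> R) :
  (forall i, f i <= g i) -> Emean f <= Emean g.
Proof.
move=> hfg; rewrite /Emean ler_wpM2l ?invr_ge0 ?ler0n //.
by apply: ler_sum => i _; apply: hfg.
Qed.

Lemma Emean_ge0 (f : 'I_N -> R) : (forall i, 0 <= f i) -> 0 <= Emean f.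
Proof.
move=> hf; rewrite /Emean mulr_ge0 ?invr_ge0 ?ler0n //.
by apply: sumr_ge0 => i _; apply: hf.
Qed.

Lemma EmeanZ (c : R) (f : 'I_N -> R) :
  Emean (fun i => c * f i) = c * Emean f.
Proof. by rewrite /Emean -mulr_sumr mulrCA. Qed.

End SampleMean.

Lemma l1norm_ge0 (R : realType) (p : nat) (g : 'I_p.+1 -> R) : 0 <= l1norm g.
Proof. by apply: sumr_ge0 => j _; apply: normr_ge0. Qed.

Section Calibration.
Variables (R : realType) (N p : nat) (Fv : 'I_N -> 'I_p.+1 -> R).

Lemma linFB (g h : 'I_p.+1 -> R) (i : 'I_N) :
  linF Fv g i - linF Fv h i = linF Fv (fun j => g j - h j) i.
Proof. by rewrite /linF -sumrB; apply: eq_bigr => j _; rewrite mulrBl. Qed.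

Lemma norm_linF_le (C0 : R) (g : 'I_p.+1 -> R) (i : 'I_N) :
  (forall j, `|Fv i j| <= C0) -> `|linF Fv g i| <= C0 * l1norm g.
Proof.
move=> hF; rewrite /l1norm mulr_sumr; apply: le_trans (ler_norm_sum _ _ _) _.
apply: ler_sum => j _; rewrite normrM mulrC.
by apply: ler_wpM2r; [apply: normr_ge0 | apply: hF].
Qed.

Lemma wfun_shift (g h : 'I_p.+1 -> R) (i : 'I_N) :
  wfun Fv g i = wfun Fv h i * expR (- linF Fv (fun j => g j - h j) i).
Proof. by rewrite /wfun -expRD -linFB; congr expR; ring. Qed.

Lemma DCALE (Rv : 'I_N -> bool) (ghat gbar : 'I_p.+1 -> R) :
  let d := linF Fv (fun j => ghat j - gbar j) in
  DCAL Fv Rv ghat gbar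
  = Emean (fun i => Rind Rv i * wfun Fv gbar i * ((1 - expR (- d i)) * d i)).
Proof.
rewrite /DCAL /Emean -mulrN -sumrN; congr (_ * _); apply: eq_bigr => i _.
by rewrite (wfun_shift ghat gbar) linFB; ring.
Qed.

Lemma Rind_wfun_ge0 (Rv : 'I_N -> bool) (g : 'I_p.+1 -> R) (i : 'I_N) :
  0 <= Rind Rv i * wfun Fv g i.
Proof. by rewrite mulr_ge0 ?ler0n // ltW ?expR_gt0. Qed.

Lemma DCAL_ge0 (Rv : 'I_N -> bool) (ghat gbar : 'I_p.+1 -> R) :
  0 <= DCAL Fv Rv ghat gbar.
Proof.
by rewrite DCALE; apply: Emean_ge0 => i; rewrite mulr_ge0 ?Rind_wfun_ge0 ?subr_expRN_mul_ge0.
Qed.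

Lemma Emean_wsqr_le_expR_DCAL (Rv : 'I_N -> bool) (ghat gbar : 'I_p.+1 -> R) (eta : R) :
  (forall i, `|linF Fv ghat i - linF Fv gbar i| <= eta) ->
  Emean (fun i => Rind Rv i * wfun Fv gbar i * (linF Fv ghat i - linF Fv gbar i) ^+ 2)
    <= expR eta * DCAL Fv Rv ghat gbar.
Proof.
move=> hd; rewrite DCALE -EmeanZ; apply: Emean_le => i.
rewrite -linFB [X in _ <= X]mulrCA ler_wpM2l ?Rind_wfun_ge0 //.
exact: sqr_le_expR_subr_expRN_mul.
Qed.

End Calibration.

Theorem lemmaS9 (R : realType) (N p : nat)
  (Fv : 'I_N -> 'I_p.+1 -> R) (Rv : 'I_N -> bool)
  (ghat gbar : 'I_p.+1 -> R) (C0 lambda0 zeta0 A0 M0 : R) :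
  0 < lambda0 -> 0 < zeta0 ->
  (forall (i : 'I_N) (j : 'I_p.+1), `|Fv i j| <= C0) ->
  #|supp0 gbar|%:R * lambda0 <= zeta0 ->
  1 < A0 -> 0 < M0 ->
  DCAL Fv Rv ghat gbar + (A0 - 1) * lambda0 * l1norm (fun j => ghat j - gbar j)
    <= M0 * #|supp0 gbar|%:R * lambda0 ^+ 2 ->
  Emean (fun i => Rind Rv i * wfun Fv gbar i
                  * (linF Fv ghat i - linF Fv gbar i) ^+ 2)
    <= expR ((A0 - 1)^-1 * M0 * C0 * zeta0) * M0 * #|supp0 gbar|%:R * lambda0 ^+ 2.
Proof.
move=> hl hz hF hS hA hM hbasic.
set S := #|supp0 gbar|%:R in hS hbasic *.
set l1 := l1norm _ in hbasic.
set eta := (A0 - 1)^-1 * M0 * C0 * zeta0.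
have hD := DCAL_ge0 Fv Rv ghat gbar.
have hl1 : (A0 - 1) * l1 <= M0 * S * lambda0.
  by rewrite -(ler_pM2l hl); nra.
have hd i : `|linF Fv ghat i - linF Fv gbar i| <= eta.
  have hC0 : 0 <= C0 by apply: le_trans (hF i ord0).
  rewrite linFB; apply: le_trans (norm_linF_le _ (hF i)) _; rewrite -/l1.
  rewrite /eta -!mulrA ler_pdivlMl ?subr_gt0 // mulrCA.
  have : M0 * C0 * (S * lambda0) <= M0 * C0 * zeta0 by rewrite ler_wpM2l ?mulr_ge0 // ltW.
  nra.
apply: le_trans (Emean_wsqr_le_expR_DCAL Rv hd) _.
rewrite -!mulrA ler_wpM2l ?expR_ge0 // !mulrA.
have : 0 <= (A0 - 1) * lambda0 * l1.
  by rewrite !mulr_ge0 ?l1norm_ge0 ?ltW // subr_gt0.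
lra.
Qed.
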